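(* Let $n\ge3$, $1\le i\le n-1$, and define integers $a_1,\dots,a_{i(n-i)}\in\{1,\dots,n-1\}$ by the word $$s_{a_1}s_{a_2}\cdots s_{a_{i(n-i)}}:=(s_is_{i-1}\cdots s_1)(s_{i+1}s_i\cdots s_2)\cdots(s_{n-1}s_{n-2}\cdots s_{n-i})$$ (a product of $n-i$ blocks of $i$ consecutive descending simple reflections; it is a reduced expression of $\bar\omega^{-i}$). For $w\in W_0$ consider the condition $$(\ast)\qquad w<ws_{a_1}<ws_{a_1}s_{a_2}<\cdots<ws_{a_1}s_{a_2}\cdots s_{a_{i(n-i)}}$$ in the Bruhat order. Then: (a) $w$ satisfies $(\ast)$ if and only if $w\in W_{(i),0}$. (b) $w$ violates $(\ast)$ at exactly one place (i.e. there is exactly one $j$ with $ws_{a_1}\cdots s_{a_{j-1}}\not< ws_{a_1}\cdots s_{a_j}$) if and only if $w\in s_iW_{(i),0}$. In this case, for the unique $1\le j\le i(n-i)$ with $ws_{a_1}\cdots s_{a_{j-1}}>ws_{a_1}\cdots s_{a_{j-1}}s_{a_j}$, one has $ws_{a_1}\cdots s_{a_{j-1}}(\alpha_{a_j})=-\alpha_i$.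
   Context: $W_0=\mathfrak{S}_n$ is the Weyl group of $\mathrm{GL}_n$, with simple reflections $s_j=(j,j+1)$, Bruhat order $\le$, and acting on the roots $\alpha_{j,k}$ ($j\ne k$; $\alpha_{j,k}(\mathrm{diag}(t_1,\dots,t_n))=t_jt_k^{-1}$) by $w(\alpha_{j,k})=\alpha_{w(j),w(k)}$; simple roots $\alpha_j=\alpha_{j,j+1}$, and $-\alpha_{j,k}=\alpha_{k,j}$. $\bar\omega$ is the $n$-cycle with $\bar\omega(1)=n$, $\bar\omega(k)=k-1$ for $k\ge2$. $W_{(i),0}$ is the subgroup generated by $\{s_j:j\ne i\}$. *)

From mathcomp Require Import all_boot all_order all_fingroup.
Set Implicit Arguments. Unset Strict Implicit. Unset Printing Implicit Defensive.

(* W_0 = S_n realized as 'S_n = {perm 'I_n}.  Paper position p in {1..n}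
   corresponds to the ordinal p-1 : 'I_n. *)

(* Composition as functions: (fcomp u v) x = u (v x).  This is the paper's
   product "u v" (MathComp's (u * v)%g on perms means "first u, then v"). *)
Definition fcomp n (u v : 'S_n) : 'S_n := (v * u)%g.

(* simple reflection s_j = (j, j+1), 1 <= j <= n-1 (paper indexing) *)
Definition sref n (j : nat) : 'S_n :=
  match n as m return 'S_m with
  | 0 => 1%g
  | m'.+1 => tperm (inord j.-1 : 'I_m'.+1) (inord j)
  end.

Definition pact n (w : 'S_n) (p : nat) : nat :=
  match @insub nat (fun x => x < n) _ p.-1 with
  | Some x => (w x).+1
  | None => p
  end.

(* roots alpha_{j,k} (j <> k positions in {1..n}) encoded as pairs (j,k) *)
Definition root := (nat * nat)%type.
Definition alpha (j k : nat) : root := (j, k).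
Definition simple_root (j : nat) : root := alpha j j.+1.
Definition negroot (r : root) : root := (r.2, r.1).
Definition root_act n (w : 'S_n) (r : root) : root := (pact w r.1, pact w r.2).

(* Coxeter length of a permutation = number of inversions *)
Definition len n (w : 'S_n) : nat :=
  #|[set p : 'I_n * 'I_n | (p.1 < p.2) && (w p.2 < w p.1)]|.

(* reflections of S_n are the transpositions *)
Definition is_reflection n (t : 'S_n) : bool :=
  [exists x : 'I_n, exists y : 'I_n, (x != y) && (t == tperm x y)].

Definition bruhat_step n : rel 'S_n :=
  fun u v => [exists t : 'S_n, is_reflection t && (v == fcomp u t) && (len u < len v)].
Definition bruhat_le n (u v : 'S_n) : bool := connect (@bruhat_step n) u v.
Definition bruhat_lt n (u v : 'S_n) : bool := (u != v) && bruhat_le u v.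

Definition Wi0 n (i : nat) : {set 'S_n} :=
  << [set sref n (j : 'I_n) | j : 'I_n & (0 < (j : nat)) && ((j : nat) != i)] >>%g.

(* the word a_1 ... a_{i(n-i)} :
   (s_i ... s_1)(s_{i+1} ... s_2) ... (s_{n-1} ... s_{n-i}) *)
Definition word (n i : nat) : seq nat :=
  flatten [seq [seq i + b - c | c <- iota 0 i] | b <- iota 0 (n - i)].

Definition pref n (i : nat) (w : 'S_n) (k : nat) : 'S_n :=
  foldl (fun u a => fcomp u (sref n a)) w (take k (word n i)).

(* Write [w_k] for the prefix [w s_(a_1) ... s_(a_k)] and index positions and
   values from 0.  For [p < i <= q], the letter at position
   [(q - i) * i + (i - 1 - p)] of the word swaps two adjacent positions at
   which [w_k] holds [w p] and [w q]; so this step goes up iff [w p < w q],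
   and its root is [alpha_(w p + 1, w q + 1)].  Hence the steps going down
   correspond bijectively to the cross inversions of [w], the pairs
   [p < i <= q] with [w q < w p].  [W_(i),0] is the setwise stabilizer of
   [{0, ..., i - 1}]: [w] has no cross inversion iff it lies in [W_(i),0],
   and exactly one iff [s_i w] does, the inversion then exchanging the values
   [i] and [i - 1], whence the root [alpha_(i+1, i) = - alpha_i]. *)

From mathcomp Require Import all_boot all_order all_fingroup.
From mathcomp Require Import zify.
Set Implicit Arguments. Unset Strict Implicit. Unset Printing Implicit Defensive.

Section SimpleReflections.
Variable n : nat.
Local Notation N := n.+1.

Definition adj_swap (a x : nat) : nat :=
  if x == a.-1 then a else if x == a then a.-1 else x.

Lemma sref_val a (x : 'I_N) : 0 < a < N -> val (sref N a x) = adj_swap a x.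
Proof.
move=> aN; rewrite /sref /adj_swap.
have ea : val (inord a : 'I_N) = a by apply: inordK; lia.
have ea1 : val (inord a.-1 : 'I_N) = a.-1 by apply: inordK; lia.
case: tpermP => [->|->|/eqP x_a1 /eqP x_a]; rewrite ?ea ?ea1 ?eqxx //.
- by case: ifP => //; lia.
- have x_a1' : val x != a.-1 by rewrite -ea1 val_eqE.
  have x_a' : val x != a by rewrite -ea val_eqE.
  by rewrite (negbTE x_a1') (negbTE x_a').
Qed.

Lemma fcompE (u v : 'S_N) x : fcomp u v x = u (v x).
Proof. by rewrite /fcomp permM. Qed.

Lemma fcomp_srefK a (u : 'S_N) : fcomp (fcomp u (sref N a)) (sref N a) = u.
Proof. by apply/permP=> x; rewrite !fcompE tpermK. Qed.

Lemma sref_fcompK a (u : 'S_N) : fcomp (sref N a) (fcomp (sref N a) u) = u.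
Proof. by apply/permP=> x; rewrite !fcompE tpermK. Qed.

Lemma fcomp_sref_pred a (u : 'S_N) : fcomp u (sref N a) (inord a.-1) = u (inord a).
Proof. by rewrite fcompE tpermL. Qed.

Lemma fcomp_sref_succ a (u : 'S_N) : fcomp u (sref N a) (inord a) = u (inord a.-1).
Proof. by rewrite fcompE tpermR. Qed.

Lemma inord_pred_neq a : 0 < a < N -> (inord a.-1 : 'I_N) != inord a.
Proof. by move=> aN; apply/eqP=> /(congr1 val); rewrite /= !inordK; lia. Qed.

(* [s_a x s_a] maps the inversions of [u] into those of [u s_a], missing the
   new inversion [(a-1, a)]. *)
Lemma len_ascent (u : 'S_N) a : 0 < a < N -> u (inord a.-1) < u (inord a) ->
  len u < len (fcomp u (sref N a)).
Proof.
move=> aN asc; set s := sref N a.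
have sxs_inj : injective (fun p : 'I_N * 'I_N => (s p.1, s p.2)).
  by move=> [x1 y1] [x2 y2] [/perm_inj -> /perm_inj ->].
rewrite /len -(card_imset _ sxs_inj); apply: proper_card; apply/properP; split.
- apply/subsetP=> _ /imsetP[[x y] /[!inE] /= /andP[xy uyx] ->].
  rewrite /= !fcompE !tpermK uyx andbT !sref_val //.
  have not_a : ~~ ((val x == a.-1) && (val y == a)).
    apply/negP=> /andP[/eqP ex /eqP ey]; move: uyx.
    have -> : x = inord a.-1 by apply: val_inj; rewrite /= inordK //; lia.
    have -> : y = inord a by apply: val_inj; rewrite /= inordK //; lia.
    by rewrite ltnNge (ltnW asc).
  move: xy not_a; rewrite /adj_swap.
  by case: (val x =P a.-1); case: (val x =P a); case: (val y =P a.-1); case: (val y =P a) => /=;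
    lia.
- exists (inord a.-1, inord a).
    by rewrite inE /= fcomp_sref_pred fcomp_sref_succ asc !inordK; lia.
  apply/imsetP=> -[[x y]]; rewrite inE /= => /andP[xy _] [ex ey].
  move: xy; have -> : x = inord a by apply: (@perm_inj _ s); rewrite -ex tpermR.
  have -> : y = inord a.-1 by apply: (@perm_inj _ s); rewrite -ey tpermL.
  by rewrite !inordK; lia.
Qed.

Lemma bruhat_lt_len (u v : 'S_N) : bruhat_lt u v -> len u < len v.
Proof.
case/andP=> uv /connectP[p pth ev].
elim: p u pth ev uv => [|y p IH] u /=; first by move=> _ -> /eqP.
case/andP=> /existsP[t /andP[/andP[_ /eqP ->] lt]] pth ev uv.
case: (eqVneq (fcomp u t) v) => [<-//|yv].
exact: ltn_trans lt (IH _ pth ev yv).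
Qed.

Lemma bruhat_ascentE (u : 'S_N) a : 0 < a < N ->
  bruhat_lt u (fcomp u (sref N a)) = (u (inord a.-1) < u (inord a)).
Proof.
move=> aN; have [asc|] := boolP (u (inord a.-1) < u (inord a)).
  have lt := len_ascent aN asc.
  rewrite /bruhat_lt; apply/andP; split.
    by apply: contraTneq lt => <-; rewrite ltnn.
  apply: connect1; apply/existsP; exists (sref N a); rewrite eqxx lt !andbT.
  apply/existsP; exists (inord a.-1); apply/existsP; exists (inord a).
  by rewrite inord_pred_neq // eqxx.
rewrite -leqNgt leq_eqVlt (inj_eq val_inj) (inj_eq perm_inj) eq_sym.
rewrite (negbTE (inord_pred_neq aN)) /=.
move=> desc; apply/negP=> /bruhat_lt_len lt.
have := len_ascent aN (_ : fcomp u (sref N a) (inord a.-1) < _).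
rewrite fcomp_sref_pred fcomp_sref_succ fcomp_srefK => /(_ desc).
by rewrite ltnNge (ltnW lt).
Qed.

Lemma bruhat_descentE (u : 'S_N) a : 0 < a < N ->
  bruhat_lt (fcomp u (sref N a)) u = (u (inord a) < u (inord a.-1)).
Proof.
by move=> aN; rewrite -{2}(fcomp_srefK a u) bruhat_ascentE // fcomp_sref_pred fcomp_sref_succ.
Qed.

Lemma pactE (u : 'S_N) x : x < N -> pact u x.+1 = (u (inord x)).+1.
Proof.
move=> xN; rewrite /pact /=; case: insubP => [y _ ey|]; last by rewrite xN.
by congr (u _).+1; apply: val_inj; rewrite /= ey inordK.
Qed.

End SimpleReflections.

Section Word.
Variables n i : nat.
Local Notation N := n.+1.

Definition blocks (m : nat) : seq nat :=
  flatten [seq [seq i + b - c | c <- iota 0 i] | b <- iota 0 m].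

Lemma blocksS m : blocks m.+1 = blocks m ++ [seq i + m - c | c <- iota 0 i].
Proof. by rewrite /blocks -addn1 iotaD map_cat flatten_cat /= cats0. Qed.

Lemma size_blocks m : size (blocks m) = m * i.
Proof. by elim: m => [//|m IH]; rewrite blocksS size_cat IH size_map size_iota mulSnr. Qed.

Lemma nth_blocks m b c : b < m -> c < i -> nth 0 (blocks m) (b * i + c) = i + b - c.
Proof.
elim: m => [//|m IH] bm ci; rewrite blocksS nth_cat size_blocks.
case: (ltnP b m) => [bm'|mb]; first by rewrite (_ : b * i + c < m * i) ?IH //; nia.
have -> : b = m by lia.
by rewrite ltnNge leq_addr /= addKn (nth_map 0) ?size_iota // nth_iota.
Qed.

Lemma size_word : size (word N i) = (N - i) * i.
Proof. exact: size_blocks. Qed.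

Lemma nth_word b c : b < N - i -> c < i -> nth 0 (word N i) (b * i + c) = i + b - c.
Proof. exact: nth_blocks. Qed.

Lemma prefS (w : 'S_N) k : k < size (word N i) ->
  pref i w k.+1 = fcomp (pref i w k) (sref N (nth 0 (word N i) k)).
Proof. by move=> lt_k; rewrite /pref (take_nth 0) // foldl_rcons. Qed.

Definition pref_pos (b c p : nat) : nat :=
  if p < b then i + p
  else if p < i + b - c then p - b
  else if p == i + b - c then i + b
  else if p <= i + b then p - b - 1
  else p.

Lemma pref_pos0 p : pref_pos 0 0 p = p.
Proof. by rewrite /pref_pos; repeat case: ifP; lia. Qed.

Lemma pref_pos_block b p : pref_pos b.+1 0 p = pref_pos b i p.
Proof. by rewrite /pref_pos; repeat case: ifP; lia. Qed.

Lemma pref_pos_step b c p : c < i ->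
  pref_pos b c (adj_swap (i + b - c) p) = pref_pos b c.+1 p.
Proof.
move=> ci; rewrite /pref_pos /adj_swap.
by case: (p =P (i + b - c).-1); case: (p =P i + b - c); repeat case: ifP; lia.
Qed.

Lemma prefE (w : 'S_N) b c (x : 'I_N) : b < N - i -> c <= i ->
  pref i w (b * i + c) x = w (inord (pref_pos b c x)).
Proof.
elim: b c x => [|b IHb] c x bN; elim: c x => [|c IHc] x ci;
  [by rewrite pref_pos0 inord_val /pref take0 | |
   by rewrite addn0 mulSn addnC pref_pos_block IHb //; lia | ];
  rewrite addnS prefS ?size_word; try nia;
  by rewrite fcompE IHc ?nth_word ?sref_val ?pref_pos_step //; lia.
Qed.

End Word.

Section CrossPairs.
Variables n i : nat.
Local Notation N := n.+1.
Hypothesis i_gt0 : 0 < i.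

Definition cross_pairs : {set 'I_N * 'I_N} := [set pq : 'I_N * 'I_N | pq.1 < i <= pq.2].

Definition cross_inv (w : 'S_N) : {set 'I_N * 'I_N} :=
  [set pq in cross_pairs | w pq.2 < w pq.1].

Definition cross_index (pq : 'I_N * 'I_N) : nat := (pq.2 - i) * i + (i.-1 - pq.1).

Lemma cross_index_lt pq : pq \in cross_pairs -> cross_index pq < size (word N i).
Proof.
case: pq => p q; rewrite inE size_word /cross_index /= => /andP[p_lt i_le].
have : (q - i).+1 * i <= (N - i) * i by rewrite leq_mul2r; have := ltn_ord q; lia.
by rewrite mulSn; move: ((q - i) * i) ((N - i) * i); lia.
Qed.

Lemma nth_word_cross pq : pq \in cross_pairs ->
  nth 0 (word N i) (cross_index pq) = (pq.1 + pq.2 - i).+1.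
Proof.
case: pq => p q; rewrite inE /= => /andP[p_lt i_le]; have q_lt := ltn_ord q.
by rewrite /cross_index /= nth_word //; lia.
Qed.

Lemma cross_letter_lt pq : pq \in cross_pairs -> 0 < (pq.1 + pq.2 - i).+1 < N.
Proof. by case: pq => p q; rewrite inE /= => /andP[p_lt i_le]; have := ltn_ord q; lia. Qed.

Lemma pref_cross (w : 'S_N) pq : pq \in cross_pairs ->
  pref i w (cross_index pq) (inord (pq.1 + pq.2 - i)) = w pq.1 /\
  pref i w (cross_index pq) (inord (pq.1 + pq.2 - i).+1) = w pq.2.
Proof.
case: pq => p q; rewrite inE /= => /andP[p_lt i_le]; have q_lt := ltn_ord q.
rewrite /cross_index /= !prefE ?inordK; try lia.
have -> : pref_pos i (q - i) (i.-1 - p) (p + q - i) = p.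
  by rewrite /pref_pos; repeat case: ifP; lia.
have -> : pref_pos i (q - i) (i.-1 - p) (p + q - i).+1 = q.
  by rewrite /pref_pos; repeat case: ifP; lia.
by rewrite !inord_val.
Qed.

Lemma ascent_cross (w : 'S_N) pq : pq \in cross_pairs ->
  bruhat_lt (pref i w (cross_index pq)) (pref i w (cross_index pq).+1) = (w pq.1 < w pq.2).
Proof.
move=> pq_cross; have [pref_p pref_q] := pref_cross w pq_cross.
rewrite prefS ?cross_index_lt // nth_word_cross // bruhat_ascentE ?cross_letter_lt //.
by rewrite pref_p pref_q.
Qed.

Lemma descent_cross (w : 'S_N) pq : pq \in cross_pairs ->
  bruhat_lt (pref i w (cross_index pq).+1) (pref i w (cross_index pq)) = (w pq.2 < w pq.1).
Proof.
move=> pq_cross; have [pref_p pref_q] := pref_cross w pq_cross.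
rewrite prefS ?cross_index_lt // nth_word_cross // bruhat_descentE ?cross_letter_lt //.
by rewrite pref_p pref_q.
Qed.

Lemma root_act_cross (w : 'S_N) pq : pq \in cross_pairs ->
  root_act (pref i w (cross_index pq)) (simple_root (nth 0 (word N i) (cross_index pq)))
  = ((w pq.1).+1, (w pq.2).+1).
Proof.
move=> pq_cross; have [pref_p pref_q] := pref_cross w pq_cross.
have /andP[_ lt_N] := cross_letter_lt pq_cross.
rewrite nth_word_cross // /root_act /simple_root /alpha /=.
by rewrite !pactE ?pref_p ?pref_q ?(ltnW lt_N).
Qed.

Lemma cross_index_inj : {in cross_pairs &, injective cross_index}.
Proof.
move=> [p q] [p' q']; rewrite !inE /cross_index /= => /andP[p_lt i_le] /andP[p'_lt i_le'] e.
have e_mod : i.-1 - p = i.-1 - p'.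
  by move: (congr1 (modn^~ i) e); rewrite !modnMDl !modn_small //; lia.
have e_div : q - i = q' - i.
  by apply/eqP; rewrite -(eqn_pmul2r i_gt0) -(eqn_add2r (i.-1 - p)) {2}e_mod e.
by congr pair; apply: ord_inj; lia.
Qed.

Lemma cross_indexP k : k < size (word N i) ->
  exists2 pq, pq \in cross_pairs & k = cross_index pq.
Proof.
rewrite size_word => k_lt.
have := divn_eq k i; have := ltn_pmod k i_gt0; have : k %/ i < N - i by rewrite ltn_divLR.
move: (k %/ i) (k %% i) => b c b_lt c_lt ->.
exists (inord (i.-1 - c), inord (i + b)); first by rewrite inE /= !inordK; lia.
by rewrite /cross_index /= !inordK; lia.
Qed.

Lemma perm_iota_cross :
  perm_eq (iota 0 (size (word N i))) [seq cross_index pq | pq <- enum cross_pairs].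
Proof.
apply: uniq_perm; first exact: iota_uniq.
  rewrite map_inj_in_uniq ?enum_uniq // => pq pq'.
  by rewrite !mem_enum; exact: cross_index_inj.
move=> k; rewrite mem_iota add0n; apply/idP/mapP => [/cross_indexP[pq pq_cross ->]|[pq]].
  by exists pq; rewrite ?mem_enum.
by rewrite mem_enum => /cross_index_lt ? ->.
Qed.

Lemma cross_pair_neq (w : 'S_N) pq : pq \in cross_pairs -> (w pq.1 : nat) != w pq.2.
Proof.
case: pq => p q; rewrite inE /= => /andP[p_lt i_le].
by rewrite val_eqE (inj_eq perm_inj) -val_eqE neq_ltn (leq_trans p_lt i_le).
Qed.

Lemma count_nonascents (w : 'S_N) :
  count (fun k => ~~ bruhat_lt (pref i w k) (pref i w k.+1)) (iota 0 (size (word N i)))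
  = #|cross_inv w|.
Proof.
rewrite (seq.permP perm_iota_cross) count_map.
rewrite (@eq_in_count _ _ (mem (cross_inv w))) => [|pq]; last first.
  rewrite mem_enum => pq_cross; rewrite /= ascent_cross // inE pq_cross /=.
  by rewrite -leqNgt leq_eqVlt eq_sym (negbTE (cross_pair_neq w pq_cross)).
by rewrite -size_filter -(perm_size (enum_setI _ _)) -cardE /cross_inv setIdE setIA setIid.
Qed.

End CrossPairs.

Lemma perm_astabsPn (T : finType) (S : {set T}) (u : {perm T}) :
  reflect (exists2 x, x \in S & u x \notin S) (u \notin 'N(S | 'P)%g).
Proof.
apply: (iffP idP) => [|[x xS]]; last by apply: contraNN => /(astabs_act x) /=; rewrite xS.
by rewrite !inE /= => /subsetPn[x xS]; rewrite inE /= apermE; exists x.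
Qed.

Lemma perm_astabs_cross (T : finType) (S : {set T}) (u : {perm T}) :
  u \notin 'N(S | 'P)%g -> exists x y, [/\ x \in S, u x \notin S, y \notin S & u y \in S].
Proof.
move=> u_unstab; have /perm_astabsPn[x xS uxS] := u_unstab.
move: u_unstab; rewrite -astabsC => /perm_astabsPn[y].
by rewrite !inE negbK => yS uyS; exists x, y.
Qed.

Section Increasing.
Variable n : nat.
Local Notation N := n.+1.

Lemma homo_ord_leq (f : 'I_N -> 'I_N) : {homo f : x y / x < y} -> forall x : 'I_N, x <= f x.
Proof.
move=> f_incr x; have [m] := ubnP (x : nat); elim: m x => // m IH x /ltnSE le_xm.
case: (posnP (x : nat)) => [-> //|x_gt0].
have y_lt : x.-1 < N by have := ltn_ord x; lia.
have := IH (Ordinal y_lt) (_ : x.-1 < m); have := f_incr (Ordinal y_lt) x.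
by rewrite /= prednK //; lia.
Qed.

Lemma incr_perm_eq1 (u : 'S_N) : {homo u : x y / x < y} -> u = 1%g.
Proof.
move=> u_incr.
have uV_incr : {homo perm_inv u : x y / x < y}.
  move=> x y xy; rewrite ltnNge leq_eqVlt negb_or; apply/andP; split.
    by rewrite val_eqE (inj_eq perm_inj); apply: contraTneq xy => ->; rewrite ltnn.
  by apply/negP=> /u_incr; rewrite !permKV ltnNge (ltnW xy).
apply/permP => x; rewrite perm1; apply/val_inj/eqP.
rewrite eqn_leq (homo_ord_leq u_incr x) andbT.
by have := homo_ord_leq uV_incr (u x); rewrite permK.
Qed.

Lemma perm_descent (u : 'S_N) : u != 1%g ->
  exists2 a, 0 < a < N & u (inord a) < u (inord a.-1).
Proof.
move=> u_neq1.
have [a /andP[a_gt0 desc]|no_desc] :=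
  pickP [pred a : 'I_N | (0 < a) && (u (inord a) < u (inord a.-1))].
  by exists (a : nat); rewrite ?a_gt0 ?ltn_ord.
have u_incr : {in [pred k | k < N] &, {homo (fun k => val (u (inord k))) : k l / k < l}}.
  apply: homo_ltn_in => [y x z|j l _ /= l_lt k /andP[_ k_l]|k _ k1_lt].
  - exact: ltn_trans.
  - exact: ltn_trans k_l l_lt.
  have := no_desc (Ordinal k1_lt); rewrite /= => /negbT; rewrite -leqNgt leq_eqVlt.
  have neq : (inord k : 'I_N) != inord k.+1 by apply: (@inord_pred_neq n k.+1); exact: k1_lt.
  by rewrite val_eqE (inj_eq perm_inj) (negbTE neq).
case/eqP: u_neq1; apply: incr_perm_eq1 => x y xy.
by have := u_incr x y (ltn_ord x) (ltn_ord y) xy; rewrite /= !inord_val.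
Qed.

End Increasing.

Section Stabilizer.
Variables n i : nat.
Local Notation N := n.+1.
Hypotheses (i_gt0 : 0 < i) (i_ltN : i < N).

Definition low : {set 'I_N} := [set x : 'I_N | x < i].

Lemma astabs_low_lt (u : 'S_N) x : u \in 'N(low | 'P)%g -> (u x < i) = (x < i).
Proof. by move=> u_stab; have := astabs_act x u_stab; rewrite /= !inE. Qed.

Lemma sref_astabs j : 0 < j < N -> j != i -> sref N j \in 'N(low | 'P)%g.
Proof.
move=> j_lt j_neq; apply/astabsP => x; rewrite /= !inE sref_val // /adj_swap.
by case: (x =P j.-1 :> nat); case: (x =P j :> nat); move: j_neq => /eqP; lia.
Qed.

Lemma Wi0E : Wi0 N i = 'N(low | 'P)%g.
Proof.
apply/eqP; rewrite eqEsubset; apply/andP; split.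
  rewrite gen_subG; apply/subsetP => ? /imsetP[j]; rewrite inE => /andP[j_gt0 j_neq] ->.
  by apply: sref_astabs; rewrite ?j_gt0 ?ltn_ord.
apply/subsetP => u; have [m] := ubnP (len u); elim: m u => // m IH u /ltnSE len_u u_stab.
have [->|/perm_descent[a a_lt desc]] := eqVneq u 1%g; first exact: group1.
have a_neq : a != i.
  apply: contraTneq desc => ->; rewrite -leqNgt.
  have := astabs_low_lt (inord i.-1) u_stab; have := astabs_low_lt (inord i) u_stab.
  by rewrite !inordK; lia.
have sref_a : sref N a \in 'N(low | 'P)%g by exact: sref_astabs.
set v := fcomp u (sref N a).
have len_v : len v < len u.
  have := len_ascent a_lt (_ : v (inord a.-1) < v (inord a)).
  by rewrite fcomp_srefK fcomp_sref_pred fcomp_sref_succ => /(_ desc).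
rewrite -(fcomp_srefK a u) -/v /fcomp groupM //.
  case/andP: a_lt => a_gt0 a_lt; apply: mem_gen; apply/imsetP.
  by exists (Ordinal a_lt); rewrite // inE a_gt0.
by apply: IH; [lia | rewrite /v /fcomp groupM].
Qed.

End Stabilizer.

Section CrossInversions.
Variables n i : nat.
Local Notation N := n.+1.
Hypotheses (i_gt0 : 0 < i) (i_ltN : i < N).
Local Notation low := (low n i).
Local Notation cross_inv := (cross_inv i).

Lemma mem_cross_inv (w : 'S_N) (p q : 'I_N) :
  ((p, q) \in cross_inv w) = [&& p < i, i <= q & w q < w p].
Proof. by rewrite !inE andbA. Qed.

Lemma not_astabs_low (w : 'S_N) : w \notin 'N(low | 'P)%g ->
  exists p q : 'I_N, [/\ p < i, i <= w p, i <= q & w q < i].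
Proof.
by case/perm_astabs_cross=> p [q]; rewrite !inE -!leqNgt => -[? ? ? ?]; exists p, q.
Qed.

Lemma cross_inv_eq0 (w : 'S_N) : (cross_inv w == set0) = (w \in 'N(low | 'P)%g).
Proof.
apply/idP/idP => [|w_stab].
  apply: contraTT => /not_astabs_low[p [q [p_lt wp_ge q_ge wq_lt]]].
  by apply/set0Pn; exists (p, q); rewrite mem_cross_inv; lia.
apply/eqP/setP => -[p q]; rewrite mem_cross_inv inE.
by have := astabs_low_lt p w_stab; have := astabs_low_lt q w_stab; lia.
Qed.

Lemma cross_inv_sref (u : 'S_N) : u \in 'N(low | 'P)%g ->
  cross_inv (fcomp (sref N i) u) = [set (perm_inv u (inord i.-1), perm_inv u (inord i))].
Proof.
move=> u_stab; apply/setP => -[p q]; rewrite mem_cross_inv inE xpair_eqE.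
rewrite -!(can2_eq (permK u) (permKV u)) -!val_eqE /= !inordK; try lia.
rewrite !fcompE !sref_val; try lia.
have := astabs_low_lt p u_stab; have := astabs_low_lt q u_stab.
by rewrite /adj_swap; case: (u p =P i.-1 :> nat); case: (u p =P i :> nat);
  case: (u q =P i.-1 :> nat); case: (u q =P i :> nat); lia.
Qed.

(* A value strictly between [w q0] and [w p0], or a second element crossing
   the cut, would produce another cross inversion. *)
Lemma cross_inv_set1 (w : 'S_N) p0 q0 : cross_inv w = [set (p0, q0)] ->
  [/\ w p0 = i :> nat, w q0 = i.-1 :> nat & forall p : 'I_N, p < i -> p != p0 -> w p < i.-1].
Proof.
move=> inv1.
have cross_eq (p q : 'I_N) : p < i -> i <= q -> w q < w p -> p = p0 /\ q = q0.
  move=> *; have /[!inv1] /set1P[-> ->] // : (p, q) \in cross_inv w.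
  by rewrite mem_cross_inv; lia.
have w_unstab : w \notin 'N(low | 'P)%g by rewrite -cross_inv_eq0 -cards_eq0 inv1 cards1.
have [p1 [q1 [p1_lt wp1_ge q1_ge wq1_lt]]] := not_astabs_low w_unstab.
have [ep1 eq1] : p1 = p0 /\ q1 = q0 by apply: cross_eq; lia.
subst p1 q1.
have no_between (r : 'I_N) : w q0 < w r < w p0 -> False.
  case: (ltnP r i) => r_i /andP[lt_r r_lt].
    by have [er _] := cross_eq r q0 r_i q1_ge lt_r; move: r_lt; rewrite er ltnn.
  by have [_ er] := cross_eq p0 r p1_lt r_i r_lt; move: lt_r; rewrite er ltnn.
have wp0 : w p0 = i :> nat.
  apply/eqP; rewrite eqn_leq wp1_ge andbT leqNgt; apply/negP => lt_i.
  by apply: (no_between (perm_inv w (inord i))); rewrite permKV inordK; lia.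
have wq0 : w q0 = i.-1 :> nat.
  apply/eqP; rewrite eqn_leq -ltnS prednK // wq1_lt /= leqNgt; apply/negP => lt_i.
  by apply: (no_between (perm_inv w (inord i.-1))); rewrite permKV inordK; lia.
split=> // p p_lt p_neq.
have wp_lt : w p < i.
  rewrite ltnNge; apply/negP => ge.
  by have [ep _] := cross_eq p q0 p_lt q1_ge (leq_trans wq1_lt ge); rewrite ep eqxx in p_neq.
have wp_neq : w p != w q0.
  by rewrite (inj_eq perm_inj); apply: contraTneq q1_ge => <-; rewrite -ltnNge.
by move: wp_neq; rewrite -val_eqE /= wq0; lia.
Qed.

Lemma cross_inv_card1 (w : 'S_N) : #|cross_inv w| = 1 ->
  fcomp (sref N i) w \in 'N(low | 'P)%g.
Proof.
move=> /eqP/cards1P[[p0 q0] /cross_inv_set1[wp0 _ w_lt]].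
apply: contraT => /perm_astabsPn[p]; rewrite !inE => p_lt.
rewrite fcompE sref_val ?i_gt0 // /adj_swap.
have [->|p_neq] := eqVneq p p0; first by rewrite wp0 eqxx; case: ifP; lia.
by have lt_wp := w_lt p p_lt p_neq; rewrite !ifN_eq; lia.
Qed.

End CrossInversions.

Lemma all_ltn_count (P : nat -> bool) m :
  (forall k, k < m -> P k) <-> count (fun k => ~~ P k) (iota 0 m) = 0.
Proof.
split => [allP|/eqP count0 k k_lt].
  apply/eqP; rewrite -leqn0 leqNgt -has_count.
  by apply/hasPn => k; rewrite mem_iota => /andP[_ /allP ->].
move: count0; rewrite -leqn0 leqNgt -has_count => /hasPn/(_ k).
by rewrite mem_iota k_lt => /(_ isT)/negbNE.
Qed.

Unset Implicit Arguments.

Theorem lemma5p2 (n i : nat) (hn : 3 <= n) (hi1 : 1 <= i) (hi2 : i <= n - 1) :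
  (forall w : 'S_n,
     (forall k, k < size (word n i) -> bruhat_lt (pref i w k) (pref i w k.+1))
     <-> w \in Wi0 n i)
  /\
  (forall w : 'S_n,
     (count (fun k => ~~ bruhat_lt (pref i w k) (pref i w k.+1))
            (iota 0 (size (word n i))) = 1)
     <-> (exists2 u, u \in Wi0 n i & w = fcomp (sref n i) u))
  /\
  (forall w : 'S_n,
     (exists2 u, u \in Wi0 n i & w = fcomp (sref n i) u) ->
     exists k, [/\ k < size (word n i),
       bruhat_lt (pref i w k.+1) (pref i w k),
       (forall k', k' < size (word n i) ->
          bruhat_lt (pref i w k'.+1) (pref i w k') -> k' = k) &
       root_act (pref i w k) (simple_root (nth 0 (word n i) k))
         = negroot (simple_root i)]).
Proof.
case: n hn hi2 => [//|n] _ hi2; have i_lt : i < n.+1 by lia.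
split; [|split] => w.
- apply: iff_trans (all_ltn_count _ _) _.
  by rewrite count_nonascents // Wi0E // -cross_inv_eq0 // -cards_eq0; exact: (rwP eqP).
- rewrite count_nonascents // Wi0E //; split => [card1|[u u_stab ->]].
    by exists (fcomp (sref n.+1 i) w); rewrite ?sref_fcompK ?cross_inv_card1.
  by rewrite cross_inv_sref // cards1.
case=> u; rewrite Wi0E // => u_stab w_eq.
have inv1 := cross_inv_sref hi1 i_lt u_stab; rewrite -w_eq in inv1.
set pq0 := (_, _) in inv1.
have /setIdP[pq0_cross desc0] : pq0 \in cross_inv i w by rewrite inv1 set11.
exists (cross_index i pq0); split.
- exact: cross_index_lt.
- by rewrite descent_cross.
- move=> k k_lt; have [pq pq_cross ->] := cross_indexP hi1 k_lt.
  rewrite descent_cross // => desc.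
  have : pq \in cross_inv i w by apply/setIdP.
  by rewrite inv1 => /set1P ->.
rewrite root_act_cross // w_eq !fcompE !permKV tpermL tpermR !inordK; try lia.
by rewrite /negroot /simple_root /alpha prednK.
Qed.
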